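(* Let $G$ be a graph and $k\ge2$. The following are equivalent: (a1) $M_k(G)$ is a non-trivial matroid and $G$ is a cacti-graph; (a2) $M_k(G)$ is a connected matroid.
   Context: Graphs are finite, may have loops and parallel edges, and have no isolated vertices. A leaf is a vertex incident to exactly one edge, which is not a loop. A cacti-graph is a graph with no isolated vertices, no leaves, and no component that is a cycle (equivalently every component has at least two cycles). For $X\subseteq E(G)$, $G\langle X\rangle$ is the subgraph with edge set $X$ and vertex set the vertices incident to $X$. For $k\ge0$, $M_k(G)$ is the matroid on $E(G)$ whose circuits are the inclusion-minimal members of $\{C\subseteq E(G):C\neq\emptyset,\ |C|=|V(G\langle C\rangle)|+k\}$. A matroid is non-trivial if it has at least one circuit and at least one cocircuit; it is connected if its ground set has at least two elements and every two elements lie in a common circuit. *)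

(* A multigraph (loops and parallel edges allowed) is given by
   finite types V (vertices), E (edges) and an endpoint map ends : E -> V * V;
   a loop is an edge whose two endpoints coincide. *)
From mathcomp Require Import all_boot.
Set Implicit Arguments. Unset Strict Implicit. Unset Printing Implicit Defensive.

Section Graph.
Variables (V E : finType) (ends : E -> V * V).

Definition inc (e : E) (v : V) : bool := ((ends e).1 == v) || ((ends e).2 == v).
Definition is_loop (e : E) : bool := (ends e).1 == (ends e).2.

Definition no_isolated : Prop := forall v : V, exists e : E, inc e v.

(* degree; a loop counts twice *)
Definition deg (v : V) : nat :=
  #|[set e | (ends e).1 == v]| + #|[set e | (ends e).2 == v]|.

Definition leaf (v : V) : Prop :=
  exists e : E, ~~ is_loop e /\ [set f | inc f v] = [set e].

Definition adj : rel V := fun u w =>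
  [exists e, (ends e == (u, w)) || (ends e == (w, u))].

Definition component (v : V) : {set V} := [set w | connect adj v w].

(* a component is a cycle: a connected graph in which every vertex has degree 2
   (this includes a single loop and a pair of parallel edges) *)
Definition component_is_cycle (v : V) : Prop :=
  forall w, w \in component v -> deg w = 2.

Definition cacti_graph : Prop :=
  no_isolated /\ (forall v, ~ leaf v) /\ (forall v, ~ component_is_cycle v).

Definition Vset (X : {set E}) : {set V} := [set v | [exists e in X, inc e v]].

(* the matroid M_k(G), given by its circuits *)
Definition kcand (k : nat) (X : {set E}) : bool :=
  (X != set0) && (#|X| == #|Vset X| + k).
Definition circuit (k : nat) (C : {set E}) : bool := minset (kcand k) C.
Definition indep (k : nat) (X : {set E}) : bool :=
  [forall C : {set E}, (C \subset X) ==> ~~ circuit k C].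
Definition basis (k : nat) (B : {set E}) : bool := maxset (indep k) B.
(* cocircuit: a minimal set meeting every basis (Oxley, Prop. 2.1.19) *)
Definition cocircuit (k : nat) (D : {set E}) : bool :=
  minset (fun X : {set E} => [forall B : {set E}, basis k B ==> (X :&: B != set0)]) D.

Definition nontrivial_M (k : nat) : Prop :=
  (exists C, circuit k C) /\ (exists D, cocircuit k D).

Definition connected_M (k : nat) : Prop :=
  2 <= #|E| /\
  forall e f : E, e != f -> exists C, [/\ circuit k C, e \in C & f \in C].

End Graph.

(* Let excess X = |X| - |V(G<X>)|.  It is supermodular and drops by at most one when
   an edge is deleted, and the circuits of M_k are exactly the tight sets of excess k,
   i.e. the sets all of whose proper subsets have smaller excess.

   If G is a cacti-graph then E itself is tight: double counting degrees shows that the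
   edges outside a proper subset Z outnumber the vertices outside V(G<Z>), since equality
   would make those vertices a union of cycle components.  When E is tight, the rank-like
   function maxf X = max {excess Y | Y <= X} allows augmenting a tight set by any given
   edge while raising its excess by one; from the empty set this yields a tight set of
   excess at most 2 through any two edges, which then grows to a tight set of excess k,
   i.e. a circuit.

   Conversely, deleting a leaf edge or an edge of a cycle component from a circuit does
   not decrease its excess, so such an edge lies in no circuit. *)

From mathcomp Require Import all_boot all_order ssralg ssrnum ssrint zify.
Set Implicit Arguments. Unset Strict Implicit. Unset Printing Implicit Defensive.
Import Order.TTheory.

Section SupermodularFunction.
Variables (T : finType) (f : {set T} -> int).
Local Open Scope ring_scope.
Hypothesis f_set0 : f set0 = 0.
Hypothesis f_supermodular : forall A B, f A + f B <= f (A :|: B) + f (A :&: B).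
Hypothesis f_setD1 : forall A x, f A <= f (A :\ x) + 1.

Lemma f_setD (A S : {set T}) : f A <= f (A :\: S) + #|S|%:Z.
Proof.
have [n] := ubnP #|S|; elim: n A S => // n IH A S.
case: (set_0Vmem S) => [-> _|[x xS] ltSn]; first by rewrite setD0 cards0; lia.
have cardS := cardsD1 x S; rewrite xS in cardS.
have -> : A :\: S = (A :\ x) :\: (S :\ x) by rewrite setDDl setD1K.
have := IH (A :\ x) (S :\ x) ltac:(lia); have := f_setD1 A x; lia.
Qed.

Definition maxf (X : {set T}) : int :=
  f (Order.arg_max set0 (fun Y : {set T} => Y \subset X) f).

Lemma maxf_ge (X Y : {set T}) : Y \subset X -> f Y <= maxf X.
Proof. by rewrite /maxf; case: arg_maxP => [|Z _]; [exact: sub0set | apply]. Qed.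

Lemma maxf_attained (X : {set T}) : exists2 Y : {set T}, Y \subset X & f Y = maxf X.
Proof. by rewrite /maxf; case: arg_maxP => [|Y YX _]; [exact: sub0set | exists Y]. Qed.

Lemma maxf_subset (X Y : {set T}) : X \subset Y -> maxf X <= maxf Y.
Proof. by move=> XY; have [Z ZX <-] := maxf_attained X; apply/maxf_ge/(subset_trans ZX). Qed.

Lemma maxf_setU (X D : {set T}) : maxf (X :|: D) <= maxf X + #|D|%:Z.
Proof.
have [Y YXD <-] := maxf_attained (X :|: D).
have : Y :\: D \subset X by rewrite subDset setUC.
by move/maxf_ge; have := f_setD Y D; lia.
Qed.

Lemma maxf_supermodular (A B : {set T}) :
  maxf A + maxf B <= maxf (A :|: B) + maxf (A :&: B).
Proof.
have [YA YAA <-] := maxf_attained A; have [YB YBB <-] := maxf_attained B.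
have := maxf_ge (setUSS YAA YBB); have := maxf_ge (setISS YAA YBB).
have := f_supermodular YA YB; lia.
Qed.

Lemma maxf_setU_ge (A D : {set T}) :
  (forall y, y \in D -> maxf A < maxf (y |: A)) -> maxf A + #|D|%:Z <= maxf (A :|: D).
Proof.
have [n] := ubnP #|D|; elim: n D => // n IH D.
case: (set_0Vmem D) => [-> _ _|[y yD] ltDn incr]; first by rewrite setU0 cards0; lia.
have yA : y \notin A by apply: contraTN (incr y yD) => yA; rewrite (setUidPr _) ?sub1set // ltxx.
have cardD := cardsD1 y D; rewrite yD in cardD.
have := IH (D :\ y) ltac:(lia) (fun z zD => incr z (subsetP (subsetDl D [set y]) z zD)).
have := maxf_supermodular (A :|: D :\ y) (y |: A).
have -> : A :|: D :\ y :|: (y |: A) = A :|: D.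
  apply/setP=> z; rewrite !inE; case: (eqVneq z y) => [->|_] /=; first by rewrite yD !orbT.
  by case: (z \in A); rewrite ?orbT ?orbF.
have -> : (A :|: D :\ y) :&: (y |: A) = A.
  apply/setP=> z; rewrite !inE; case: (eqVneq z y) => [->|_] /=; first by rewrite (negbTE yA).
  by case: (z \in A); rewrite ?andbT ?andbF.
have := incr y yD; lia.
Qed.

Definition tight (X : {set T}) : Prop := forall Y : {set T}, Y \proper X -> f Y < f X.

Lemma tight0 : tight set0.
Proof. by move=> Y; rewrite properE sub0set andbF. Qed.

Lemma tight_maxf (X : {set T}) : tight X -> maxf X = f X.
Proof.
move=> tX; have [Y YX fY] := maxf_attained X; have := maxf_ge (subxx X).
case: (eqVneq Y X) => [eYX|neYX]; first by rewrite -fY eYX.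
by have := tX Y; rewrite properEneq neYX YX => /(_ isT); lia.
Qed.

Lemma tight_setT_maxfD1 x : tight setT -> maxf (setT :\ x) < maxf setT.
Proof.
move=> tT; rewrite [maxf setT]tight_maxf //; have [Y Yx <-] := maxf_attained (setT :\ x).
by apply: tT; apply: sub_proper_trans Yx _; rewrite properD1 ?inE.
Qed.

Lemma maxf_jump (X : {set T}) g :
  g \notin X -> maxf (setT :\ g) < maxf setT ->
  exists A : {set T}, [/\ X \subset A, g \notin A, maxf A <= maxf X & maxf X < maxf (g |: A)].
Proof.
(* Take A maximal.  If g did not raise maxf A, every element outside g |: A would, and
   [maxf_setU_ge] with [maxf_setU] would give maxf setT <= maxf (setT :\ g). *)
move=> gX ess.
pose P (A : {set T}) := [&& X \subset A, g \notin A & maxf A <= maxf X].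
have [A /maxsetP[/and3P[XA gA leAX] Amax] _] := @maxset_exists _ P X
  ltac:(by rewrite /P subxx gX lexx).
exists A; split => //; rewrite ltNge; apply/negP => leGX.
have eqAX : maxf A = maxf X by have := maxf_subset XA; lia.
have incr y : y \in ~: (g |: A) -> maxf A < maxf (y |: A).
  rewrite !inE negb_or => /andP[yg yA]; rewrite ltNge; apply/negP => leyA.
  have /Amax /(_ (subsetUr _ _)) /setP /(_ y) : P (y |: A).
    by rewrite /P !inE (subset_trans XA (subsetUr _ _)) negb_or eq_sym yg gA; lia.
  by rewrite !inE eqxx (negbTE yA).
have := maxf_setU_ge incr; have := maxf_setU (g |: A) (~: (g |: A)).
rewrite setUCr => leT.
have /maxf_subset : A :|: ~: (g |: A) \subset setT :\ g.
  by apply/subsetP=> z; rewrite !inE negb_or; case: eqP => [->|]; rewrite ?(negbTE gA).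
lia.
Qed.

Lemma tight_augment (X : {set T}) g :
  tight X -> g \notin X -> maxf (setT :\ g) < maxf setT ->
  exists Y : {set T}, [/\ tight Y, X \subset Y, g \in Y & f Y = f X + 1].
Proof.
move=> tX gX ess; have [A [XA gA leAX ltXgA]] := maxf_jump gX ess.
rewrite [maxf X]tight_maxf // in leAX ltXgA.
have leS : maxf (g |: A) <= f X + 1.
  by have := maxf_setU A [set g]; rewrite cards1 setUC; lia.
pose P (Y : {set T}) := (Y \subset g |: A) && (f X < f Y).
have [Y0 Y0S fY0] := maxf_attained (g |: A).
have [Y /minsetP[/andP[YS ltXY] Ymin] _] := @minset_exists _ P Y0
  ltac:(by rewrite /P Y0S fY0).
have fY : f Y = f X + 1 by have := maxf_ge YS; lia.
have tY : tight Y.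
  move=> Z ltZY; suff : ~~ (f X < f Z) by lia.
  apply/negP => ltXZ.
  have PZ : P Z by rewrite /P (subset_trans (proper_sub ltZY) YS).
  by move: ltZY (Ymin Z PZ (proper_sub ltZY)) => /[swap] ->; rewrite properxx.
exists Y; split => //.
- apply/negPn/negP => XY.
  have /tX : Y :&: X \proper X.
    by rewrite properEneq subsetIr andbT; apply: contraNneq XY => <-; exact: subsetIl.
  have /maxf_ge : Y :|: X \subset g |: A by rewrite subUset YS (subset_trans XA) ?subsetUr.
  have := f_supermodular Y X; lia.
- apply/negPn/negP => gY.
  have /maxf_ge : Y \subset A.
    apply/subsetP=> z zY; move/subsetP: YS => /(_ z zY); rewrite !inE.
    by case/orP => [/eqP zg|//]; move: gY; rewrite -zg zY.
  lia.
Qed.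

Lemma tight_grow (X : {set T}) (k : int) :
  tight X -> f X <= k <= f setT -> exists2 Y : {set T}, X \subset Y & tight Y /\ f Y = k.
Proof.
move=> tX /andP[leXk lekT].
pose P (Y : {set T}) := (X \subset Y) && (k <= f Y).
have [Y /minsetP[/andP[XY leYk] Ymin] _] := @minset_exists _ P setT
  ltac:(by rewrite /P subsetT).
have notP (Z : {set T}) : Z \subset Y -> X \subset Z -> Z != Y -> f Z < k.
  move=> ZY XZ neZY; rewrite ltNge; apply: contra neZY => leZk.
  by rewrite (Ymin Z _ ZY) //; apply/andP.
have fY : f Y = k.
  case: (eqVneq Y X) => [eYX|neYX]; first by move: leXk; rewrite -eYX; lia.
  have /properP[_ [y yY yX]] : X \proper Y by rewrite properEneq eq_sym neYX XY.
  have XYy : X \subset Y :\ y by rewrite subsetD1 XY.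
  have := notP _ (subsetDl Y [set y]) XYy (proper_neq (properD1 yY)).
  have := f_setD1 Y y; lia.
exists Y => //; split => // Z ltZY.
have leIX : f (Z :&: X) <= f X.
  case: (eqVneq (Z :&: X) X) => [->|neIX]; first exact: lexx.
  by apply/ltW/tX; rewrite properEneq neIX subsetIr.
have := f_supermodular Z X.
have ZXY : Z :|: X \subset Y by rewrite subUset (proper_sub ltZY) XY.
case: (eqVneq (Z :|: X) Y) => [eU|neU]; last first.
  by have := notP _ ZXY (subsetUr Z X) neU; lia.
have /tX : Z :&: X \proper X.
  rewrite properEneq subsetIr andbT; apply: contraTneq ltZY => eIX.
  by rewrite -eU (setUidPl _) ?properxx // -eIX subsetIl.
rewrite eU; lia.
Qed.

Definition level (k : int) (C : {set T}) : bool := (C != set0) && (f C == k).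

Lemma level_sub (Y : {set T}) (k : int) :
  0 < k -> k <= f Y -> exists2 Z : {set T}, Z \subset Y & level k Z.
Proof.
move=> k_gt0 leYk.
have [Z /minsetP[leZk Zmin] ZY] := @minset_exists _ (fun Z => k <= f Z) Y leYk.
have /set0Pn[z zZ] : Z != set0 by apply: contraTneq leZk => ->; rewrite f_set0 -ltNge.
exists Z => //; apply/andP; split; first by apply/set0Pn; exists z.
rewrite eq_le leZk andbT leNgt; apply/negP => ltkZ.
have /Zmin /(_ (subsetDl Z [set z])) /setP /(_ z) : k <= f (Z :\ z).
  by have := f_setD1 Z z; lia.
by rewrite !inE eqxx zZ.
Qed.

Lemma minset_levelP (k : int) (C : {set T}) :
  0 < k -> minset (level k) C <-> tight C /\ f C = k.
Proof.
move=> k_gt0; split.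
  move=> /minsetP[/andP[_ /eqP fC] Cmin]; split => // Y ltYC.
  rewrite fC ltNge; apply/negP => /(level_sub k_gt0) [Z ZY lvZ].
  have eZC := Cmin Z lvZ (subset_trans ZY (proper_sub ltYC)).
  by move: ltYC; rewrite -eZC properE ZY andbF.
move=> [tC fC]; apply/minsetP; split.
  rewrite /level fC eqxx andbT; apply: contraTneq k_gt0 => C0.
  by rewrite -fC C0 f_set0 ltxx.
move=> Y /andP[_ /eqP fY] YC; apply/eqP; apply: contraTT isT => neYC.
have /tC : Y \proper C by rewrite properEneq neYC YC.
by rewrite fY fC ltxx.
Qed.

Lemma tight_setT_pair (k : int) e g :
  tight setT -> 2 <= k <= f setT ->
  exists C : {set T}, [/\ minset (level k) C, e \in C & g \in C].
Proof.
move=> tT /andP[k_ge2 lekT]; have ess x := tight_setT_maxfD1 x tT.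
have [X1 [tX1 _ eX1 fX1]] := tight_augment tight0 (negbT (in_set0 e)) (ess e).
have [X [tX eX gX fX]] : exists X, [/\ tight X, e \in X, g \in X & f X <= 2].
  rewrite f_set0 in fX1.
  case: (boolP (g \in X1)) => gX1; first by exists X1; split => //; lia.
  have [X2 [tX2 X12 gX2 fX2]] := tight_augment tX1 gX1 (ess g).
  by exists X2; split => //; [exact: (subsetP X12) | lia].
have [C XC [tC fC]] := tight_grow tX (ltac:(lia) : f X <= k <= f setT).
exists C; split; rewrite ?(subsetP XC) //.
by apply/minset_levelP; rewrite ?fC //; lia.
Qed.

End SupermodularFunction.

Section Multigraph.
Variables (V E : finType) (ends : E -> V * V).
Local Open Scope ring_scope.

Local Notation Vset := (Vset ends).
Local Notation deg := (deg ends).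

Lemma mem_Vset (X : {set E}) a v : a \in X -> inc ends a v -> v \in Vset X.
Proof. by move=> aX av; rewrite inE; apply/exists_inP; exists a. Qed.

Lemma Vset_ends (X : {set E}) a : a \in X -> ((ends a).1 \in Vset X) && ((ends a).2 \in Vset X).
Proof. by move=> aX; apply/andP; split; apply: (mem_Vset aX); rewrite /inc eqxx ?orbT. Qed.

Lemma Vset_sub (X : {set E}) (W : {set V}) :
  (forall a, a \in X -> ((ends a).1 \in W) && ((ends a).2 \in W)) -> Vset X \subset W.
Proof.
move=> XW; apply/subsetP=> v; rewrite inE => /exists_inP[a /XW/andP[a1 a2]].
by case/orP=> /eqP <-.
Qed.

Lemma Vset0 : Vset set0 = set0.
Proof. by apply/setP=> v; rewrite !inE; apply/exists_inP=> -[a]; rewrite inE. Qed.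

Lemma VsetU (A B : {set E}) : Vset (A :|: B) = Vset A :|: Vset B.
Proof.
apply/setP=> v; rewrite !inE; apply/exists_inP/orP => [[a]|].
  by rewrite inE => /orP[] aX av; [left|right]; apply/exists_inP; exists a.
by case=> /exists_inP[a aX av]; exists a; rewrite // inE aX ?orbT.
Qed.

Lemma VsetS (A B : {set E}) : A \subset B -> Vset A \subset Vset B.
Proof.
move=> /subsetP AB; apply/subsetP=> v; rewrite !inE => /exists_inP[a aA av].
by apply/exists_inP; exists a; rewrite ?AB.
Qed.

Definition excess (X : {set E}) : int := #|X|%:Z - #|Vset X|%:Z.

Lemma excess0 : excess set0 = 0.
Proof. by rewrite /excess Vset0 !cards0. Qed.

Lemma excess_supermodular (A B : {set E}) :
  excess A + excess B <= excess (A :|: B) + excess (A :&: B).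
Proof.
rewrite /excess VsetU.
have VI : Vset (A :&: B) \subset Vset A :&: Vset B.
  by rewrite subsetI !VsetS ?subsetIl ?subsetIr.
have := subset_leq_card VI; have := cardsUI A B; have := cardsUI (Vset A) (Vset B); lia.
Qed.

Lemma excess_setD1 (A : {set E}) a : excess A <= excess (A :\ a) + 1.
Proof.
rewrite /excess; have := subset_leq_card (VsetS (subsetDl A [set a])).
have := cardsD1 a A; case: (a \in A) => /=; lia.
Qed.

Lemma circuitE k (C : {set E}) : circuit ends k C = minset (level excess k%:Z) C.
Proof.
apply: minset_eq => X; rewrite /kcand /level /excess; congr (_ && _).
by apply/eqP/eqP; lia.
Qed.

Lemma circuitP k (C : {set E}) :
  (0 < k)%N -> circuit ends k C <-> tight excess C /\ excess C = k%:Z.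
Proof.
move=> k_gt0; rewrite circuitE.
by apply: (minset_levelP excess0 excess_setD1); lia.
Qed.

Lemma sum_card_fiber (A : {set E}) (W : {set V}) (p : E -> V) :
  (\sum_(w in W) #|[set a in A | p a == w]| = #|[set a in A | p a \in W]|)%N.
Proof.
rewrite -sum1_card (partition_big p (mem W)) /=; last by move=> a; rewrite inE => /andP[].
apply: eq_bigr => w wW; rewrite -sum1_card; apply: eq_bigl => a; rewrite !inE.
by case: eqP => [->|_]; rewrite ?wW ?andbT ?andbF.
Qed.

Lemma sum_deg (W : {set V}) :
  (\sum_(w in W) deg w = #|[set a | (ends a).1 \in W]| + #|[set a | (ends a).2 \in W]|)%N.
Proof.
have setTE (p : E -> V) (U : {set V}) :
    #|[set a | p a \in U]| = #|[set a in [set: E] | p a \in U]|.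
  by apply: eq_card => a; rewrite !inE.
rewrite 2!setTE -2!sum_card_fiber -big_split; apply: eq_bigr => w _.
by rewrite /deg; congr (_ + _); apply: eq_card => a; rewrite !inE.
Qed.

Lemma excess_le0 (A : {set E}) : (forall w, w \in Vset A -> deg w <= 2)%N -> excess A <= 0.
Proof.
move=> deg_le2.
have inA (p : E -> V) : (forall a, a \in A -> p a \in Vset A) ->
    #|[set a in A | p a \in Vset A]| = #|A|.
  by move=> pA; apply: eq_card => a; rewrite inE; apply: andb_idr; apply: pA.
have s1 := sum_card_fiber A (Vset A) (fun a => (ends a).1).
have s2 := sum_card_fiber A (Vset A) (fun a => (ends a).2).
rewrite inA in s1; last by move=> a /Vset_ends/andP[].
rewrite inA in s2; last by move=> a /Vset_ends/andP[].
have : (\sum_(w in Vset A) (#|[set a in A | (ends a).1 == w]| + #|[set a in A | (ends a).2 == w]|)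
        <= \sum_(w in Vset A) 2)%N.
  apply: leq_sum => w wA; apply: leq_trans (deg_le2 w wA).
  by apply: leq_add; apply/subset_leq_card/subsetP => a; rewrite !inE => /andP[].
rewrite big_split /= s1 s2 sum_nat_const /excess; lia.
Qed.

Lemma deg_gt1 w : no_isolated ends -> ~ leaf ends w -> (1 < deg w)%N.
Proof.
move=> iso noleaf; have [e ew] := iso w.
set S1 := [set a | (ends a).1 == w]; set S2 := [set a | (ends a).2 == w].
have incE : [set a | inc ends a w] = S1 :|: S2 by apply/setP=> a; rewrite !inE.
have eS : e \in S1 :|: S2 by rewrite -incE inE.
have cUI := cardsUI S1 S2; have /card_gt0P cU : exists a, a \in S1 :|: S2 by exists e.
rewrite ltnNge; apply/negP => deg_le1; apply: noleaf; exists e; split.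
  apply/negP => /eqP loop_e; move: ew; rewrite /inc -loop_e orbb => ew.
  have /card_gt0P : exists a, a \in S1 :&: S2 by exists e; rewrite !inE -loop_e ew.
  by move: deg_le1; rewrite /deg -/S1 -/S2; lia.
rewrite incE; apply/eqP; rewrite eq_sym eqEcard sub1set eS cards1.
by move: deg_le1; rewrite /deg -/S1 -/S2; lia.
Qed.

Definition ends_closed (W : {set V}) : Prop :=
  forall a : E, ((ends a).1 \in W) = ((ends a).2 \in W).

Lemma component_ends_closed v : ends_closed (component ends v).
Proof.
move=> a; rewrite !inE; apply/idP/idP => va; apply: (connect_trans va);
  by apply/connect1/existsP; exists a; rewrite -surjective_pairing eqxx ?orbT.
Qed.

Lemma ends_closed_cycle (W : {set V}) v :
  ends_closed W -> v \in W -> (forall w, w \in W -> deg w = 2) -> component_is_cycle ends v.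
Proof.
move=> clW vW degW w; rewrite inE => vw; apply: degW.
have clAdj : closed (adj ends) W.
  by move=> x y /existsP[a /orP[] /eqP ea]; have := clW a; rewrite ea /= => ->.
by rewrite -(closed_connect clAdj vw).
Qed.

Lemma exists_cycle_component (W : {set V}) (F : {set E}) :
  (forall w, 1 < deg w)%N ->
  (forall a, ((ends a).1 \in W) || ((ends a).2 \in W) -> a \in F) ->
  F != set0 -> (#|F| <= #|W|)%N -> exists v, component_is_cycle ends v.
Proof.
move=> deg_gt1 touchF /set0Pn[y yF] leFW.
set S1 := [set a | (ends a).1 \in W]; set S2 := [set a | (ends a).2 \in W].
have S1F : S1 \subset F by apply/subsetP=> a; rewrite inE => aW; apply: touchF; rewrite aW.
have S2F : S2 \subset F by apply/subsetP=> a; rewrite inE => aW; apply: touchF; rewrite aW orbT.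
(* 2|W| <= sum of the degrees on W = |S1| + |S2| <= 2|F| <= 2|W| are all equalities. *)
have [le2W] : (\sum_(w in W) 2 <= \sum_(w in W) deg w ?= iff [forall (w | w \in W), 2 == deg w])%N.
  by apply: leqif_sum => w _; apply/leqif_eq/deg_gt1.
rewrite sum_nat_const sum_deg -/S1 -/S2 in le2W *.
have c1 := subset_leq_card S1F; have c2 := subset_leq_card S2F.
have [eq1 eq2] : S1 = F /\ S2 = F.
  by split; apply/eqP; rewrite eqEcard ?S1F ?S2F /=; lia.
have -> : (#|W| * 2 == #|S1| + #|S2|)%N by rewrite eq1 eq2; lia.
move=> /esym/forall_inP deg2; exists (ends y).1.
apply: (@ends_closed_cycle W) => [a||w /deg2 /eqP //].
  have inS : (a \in S1) = (a \in S2) by rewrite eq1 eq2.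
  by rewrite !inE in inS.
by move: yF; rewrite -eq1 inE.
Qed.

Lemma setT_tight :
  no_isolated ends -> (forall v, ~ leaf ends v) -> (forall v, ~ component_is_cycle ends v) ->
  tight excess setT.
Proof.
move=> iso noleaf nocycle Z /properP[_ [y _ yZ]].
have VsetT : Vset setT = setT.
  by apply/setP=> v; have [a av] := iso v; rewrite (mem_Vset _ av) ?inE.
suff : (#|~: Vset Z| < #|~: Z|)%N.
  rewrite /excess VsetT !cardsT; have := cardsC Z; have := cardsC (Vset Z); lia.
rewrite ltnNge; apply/negP => leFW.
have touch a : ((ends a).1 \in ~: Vset Z) || ((ends a).2 \in ~: Vset Z) -> a \in ~: Z.
  by rewrite !in_setC; apply: contraTN => aZ; rewrite negb_or !negbK; apply: Vset_ends.
have F0 : ~: Z != set0 by apply/set0Pn; exists y; rewrite inE.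
by have [v /nocycle] := exists_cycle_component (fun w => deg_gt1 iso (noleaf w)) touch F0 leFW.
Qed.

Section ClosedVertexSet.
Variable W : {set V}.
Hypothesis clW : ends_closed W.
Let K := [set a | (ends a).1 \in W].

Lemma Vset_edges_closed (X : {set E}) : Vset (X :&: K) \subset W.
Proof. by apply: Vset_sub => a; rewrite !inE -clW => /andP[_ ->]. Qed.

Lemma excess_split (C : {set E}) : excess C = excess (C :&: K) + excess (C :\: K).
Proof.
have VB : Vset (C :\: K) \subset ~: W.
  by apply: Vset_sub => a; rewrite !inE -clW => /andP[-> _].
have := subset_leq_card (setISS (Vset_edges_closed C) VB); rewrite setICr cards0.
have := cardsUI (Vset (C :&: K)) (Vset (C :\: K)); rewrite -VsetU setID.
have := cardsID K C; rewrite /excess; lia.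
Qed.

End ClosedVertexSet.

Lemma leaf_edge_notin_circuit k v e (C : {set E}) :
  (0 < k)%N -> [set a | inc ends a v] = [set e] -> circuit ends k C -> e \notin C.
Proof.
move=> k_gt0 incv /(circuitP _ k_gt0)[tC _]; apply/negP => eC.
have inc_v a : inc ends a v = (a == e) by rewrite -in_set1 -incv inE.
have vC : v \in Vset C by apply: (mem_Vset eC); rewrite inc_v.
have VD : Vset (C :\ e) \subset Vset C :\ v.
  apply/subsetP=> x xD; rewrite in_setD1 (subsetP (VsetS (subsetDl C [set e])) x xD) andbT.
  apply: contraTneq xD => ->; rewrite inE; apply/exists_inP=> -[a].
  by rewrite in_setD1 inc_v => /andP[/negbTE ->].
have := tC _ (properD1 eC); have := subset_leq_card VD.
have := cardsD1 e C; have := cardsD1 v (Vset C); rewrite eC vC /excess; lia.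
Qed.

Lemma cycle_component_notin_circuit k v e (C : {set E}) :
  (0 < k)%N -> component_is_cycle ends v -> inc ends e v -> circuit ends k C -> e \notin C.
Proof.
move=> k_gt0 cyc ev /(circuitP _ k_gt0)[tC fC]; apply/negP => eC.
have clU := component_ends_closed v.
set K := [set a | (ends a).1 \in component ends v].
have eK : e \in K.
  by rewrite inE; case/orP: ev => /eqP ev; [rewrite ev | rewrite clU ev]; rewrite inE connect0.
have := excess_split clU C; rewrite -/K.
have : excess (C :&: K) <= 0.
  by apply: excess_le0 => w /(subsetP (Vset_edges_closed clU C)) /cyc ->.
have /tC : C :\: K \proper C.
  by rewrite properEneq subsetDl andbT; apply/eqP => BC; move: eC; rewrite -BC inE eK.
lia.
Qed.

Lemma circuit_card_gt1 k (C : {set E}) : (0 < k)%N -> circuit ends k C -> (1 < #|C|)%N.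
Proof.
move=> k_gt0 /minsetp /andP[/set0Pn[a aC] /eqP->].
have /card_gt0P : exists v, v \in Vset C by exists (ends a).1; case/andP: (Vset_ends aC).
lia.
Qed.

Lemma exists_cocircuit k : (0 < k)%N -> (0 < #|E|)%N -> exists D, cocircuit ends k D.
Proof.
move=> k_gt0 /card_gt0P[e _].
have indep_e : indep ends k [set e].
  apply/forall_inP => C /subset_leq_card; rewrite cards1 => C_le1.
  by apply: contraTN C_le1 => /(circuit_card_gt1 k_gt0); rewrite -ltnNge.
pose meets_bases (X : {set E}) := [forall B, basis ends k B ==> (X :&: B != set0)].
have : meets_bases setT.
  apply/forallP=> B; apply/implyP => /maxsetP[_ Bmax]; rewrite setTI.
  apply: contraTneq isT => B0; have := Bmax _ indep_e.
  by rewrite B0 sub0set => /(_ isT)/setP/(_ e); rewrite !inE eqxx.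
by case/minset_exists => D Dmin _; exists D.
Qed.

Lemma connected_M_cover k e : connected_M ends k -> exists2 C, circuit ends k C & e \in C.
Proof.
case=> cardE conn; have /card_gt0P[f] : (0 < #|[set: E] :\ e|)%N.
  by have := cardsD1 e [set: E]; rewrite inE cardsT; lia.
rewrite !inE eq_sym => /andP[ef _].
by have [C [Ccirc eC _]] := conn e f ef; exists C.
Qed.

Lemma circuit_through k (C0 : {set E}) e g :
  (1 < k)%N -> tight excess setT -> circuit ends k C0 ->
  exists C, [/\ circuit ends k C, e \in C & g \in C].
Proof.
move=> k_gt1 tT /(circuitP _ (ltnW k_gt1))[_ fC0].
have lekT : k%:Z <= excess setT.
  by rewrite -fC0 -(tight_maxf excess0 tT); apply/maxf_ge/subsetT.
have [C [Cmin eC gC]] := tight_setT_pair excess0 excess_supermodular excess_setD1 e g tT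
  (ltac:(rewrite lekT andbT; lia) : 2 <= k%:Z <= excess setT).
by exists C; rewrite circuitE.
Qed.

End Multigraph.

Theorem mainTheorem13 (V E : finType) (ends : E -> V * V) (k : nat) :
  no_isolated ends -> 2 <= k ->
  ((nontrivial_M ends k /\ cacti_graph ends) <-> connected_M ends k).
Proof.
move=> iso k_gt1; have k_gt0 : (0 < k)%N by lia.
split.
  case=> [[[C0 C0circ] _] [_ [noleaf nocycle]]].
  have tT := setT_tight iso noleaf nocycle.
  split; first exact: leq_trans (circuit_card_gt1 k_gt0 C0circ) (max_card _).
  by move=> e g _; apply: circuit_through C0circ.
move=> conn; have cover e := connected_M_cover e conn.
have E_gt0 : (0 < #|E|)%N by case: conn; lia.
have /card_gt0P[e0 _] := E_gt0.
split; first split.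
- by have [C Ccirc _] := cover e0; exists C.
- exact: exists_cocircuit.
split => //; split.
- move=> v [e [_ incv]]; have [C Ccirc eC] := cover e.
  by move: eC; apply/negP/(leaf_edge_notin_circuit k_gt0 incv).
- move=> v cyc; have [e ev] := iso v; have [C Ccirc eC] := cover e.
  by move: eC; apply/negP/(cycle_component_notin_circuit k_gt0 cyc ev).
Qed.
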